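(* For every ground state $s\in\mathcal{S}$ and every level $\mathfrak{h}\ge1$ of the hierarchy (i.e. every $\mathfrak{h}\in[1,\mathfrak{m}]$), there exists $\mathcal{P}\in\mathscr{P}^{\star,\mathfrak{h}}_{\rm rec}$ with $s\in\mathcal{P}$. In other words, the unique element of $\mathscr{P}^{\star,\mathfrak{h}}$ containing $s$ belongs to one of the closed communicating classes of $\mathfrak{X}^{\star,\mathfrak{h}}$, not to the transient set.
   Context: Setting. Let $\Omega$ be a finite set with a connected undirected graph structure; write $\eta\sim\xi$ if $\{\eta,\xi\}$ is an edge. Let $\mathbb{H}:\Omega\to\mathbb{R}$. Paths and heights. A path $\omega:\eta\to\xi$ is a sequence $(\omega_n)_{n=0}^N$ with $\omega_0=\eta$, $\omega_N=\xi$ and $\omega_n\sim\omega_{n+1}$ ($N=0$ allowed). Its height is $\Phi_\omega:=\max_n\mathbb{H}(\omega_n)$. Set $\Phi(\eta,\xi):=\min_{\omega:\eta\to\xi}\Phi_\omega$. For nonempty sets, $\Phi(\mathcal{A},\mathcal{B}):=\min_{\eta\in\mathcal{A},\xi\in\mathcal{B}}\Phi(\eta,\xi)$, and $\Phi(\mathcal{A},\eta):=\Phi(\mathcal{A},\{\eta\})$. Ground states. $\mathcal{S}:=\operatorname{argmin}_\Omega\mathbb{H}$, $\overline{\Phi}:=\max_{s,s'\in\mathcal{S}}\Phi(s,s')$, and $\overline{\Omega}:=\{\eta:\Phi(\mathcal{S},\eta)\le\overline{\Phi}\}$. Sets. For $\mathcal{A}\subseteq\Omega$: $\mathcal{F}(\mathcal{A}):=\operatorname{argmin}_{\mathcal{A}}\mathbb{H}$;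 $\partial\mathcal{A}:=\{\eta\notin\mathcal{A}:\eta\sim\xi\text{ for some }\xi\in\mathcal{A}\}$; $\partial^\star\mathcal{A}:=\mathcal{F}(\partial\mathcal{A})$. A set is connected if any two of its points are joined by a path inside it. Stable plateaux and cycles. A stable plateau is a nonempty connected set $\mathcal{P}$ with constant energy $\mathbb{H}(\mathcal{P})$ such that $\mathbb{H}>\mathbb{H}(\mathcal{P})$ on $\partial\mathcal{P}$. A cycle is a nonempty connected $\mathcal{C}$ with $\max_{\mathcal{C}}\mathbb{H}<\min_{\partial\mathcal{C}}\mathbb{H}$. Its depth is $\Gamma^{\mathcal{C}}:=\min_{\partial\mathcal{C}}\mathbb{H}-\min_{\mathcal{C}}\mathbb{H}$. General construction (C). Let $\mathscr{C}$ be a collection of pairwise disjoint cycles contained in $\overline{\Omega}$ with $|\mathscr{C}|\ge2$, and let $\Gamma^\star>0$. Put - $\mathscr{C}^\star:=\{\mathcal{C}\in\mathscr{C}:\Gamma^{\mathcal{C}}\ge\Gamma^\star\}$ and $\mathscr{C}^\sharp:=\{\mathcal{C}\in\mathscr{C}:\Gamma^{\mathcal{C}}<\Gamma^\star\}$; - $\mathscr{P}^{\mathscr{C}}:=\{\mathcal{F}(\mathcal{C}):\mathcal{C}\in\mathscr{C}\}$ and $\mathscr{P}^{\mathscr{C}^\star}:=\{\mathcal{F}(\mathcal{C}):\mathcal{C}\in\mathscr{C}^\star\}$; - $\Delta^{\mathscr{C}}:=\overline{\Omega}\setminus\bigcup_{\mathcal{C}\in\mathscr{C}}\mathcal{C}$.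 Let $\mathfrak{X}^{\mathscr{C}}$ be the continuous-time Markov chain on $\Omega^{\mathscr{C}}:=\Delta^{\mathscr{C}}\cup\mathscr{P}^{\mathscr{C}}$, in which each $\mathcal{F}(\mathcal{C})$ is treated as a single point. Its rates are: - $\mathfrak{R}^{\mathscr{C}}(\eta,\xi)=1$ for $\eta,\xi\in\Delta^{\mathscr{C}}$ with $\eta\sim\xi$ and $\mathbb{H}(\xi)\le\mathbb{H}(\eta)$; - $\mathfrak{R}^{\mathscr{C}}(\eta,\mathcal{F}(\mathcal{C}))=|\{\zeta\in\mathcal{C}:\eta\sim\zeta\}|$ for $\eta\in\Delta^{\mathscr{C}}\cap\partial\mathcal{C}$; - $\mathfrak{R}^{\mathscr{C}}(\mathcal{F}(\mathcal{C}),\eta)=|\mathcal{F}(\mathcal{C})|^{-1}|\{\zeta\in\mathcal{C}:\eta\sim\zeta\}|$ if $\Gamma^{\mathcal{C}}\le\Gamma^\star$ and $\eta\in\partial^\star\mathcal{C}$; - all other rates are $0$. The trace chain $\mathfrak{X}^{\mathscr{C}^\star}$ on $\mathscr{P}^{\mathscr{C}^\star}$ has rates, for distinct $\mathcal{C},\mathcal{C}'\in\mathscr{C}^\star$, $$\mathfrak{R}^{\mathscr{C}^\star}(\mathcal{F}(\mathcal{C}),\mathcal{F}(\mathcal{C}')):=\sum_{\eta\in\Delta^{\mathscr{C}}}\mathfrak{R}^{\mathscr{C}}(\mathcal{F}(\mathcal{C}),\eta)\,\mathbf{P}^{\mathscr{C}}_\eta[\mathcal{T}_{\mathcal{F}(\mathcal{C}')}=\mathcal{T}_{\mathscr{P}^{\mathscr{C}^\star}}].$$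 Here $\mathbf{P}^{\mathscr{C}}_\eta$ is the law of $\mathfrak{X}^{\mathscr{C}}$ started at $\eta$, and $\mathcal{T}_{\mathcal{A}}$ is the hitting time of $\mathcal{A}$. Hierarchy. Let $\mathscr{P}^1=\{\mathcal{P}_1^1,\dots,\mathcal{P}^1_{\nu_0}\}$ be the collection of all stable plateaux contained in $\overline{\Omega}$, and assume $\nu_0\ge2$. Suppose that at some level $\mathfrak{h}\ge1$ the sets $\mathcal{P}^{\mathfrak{h}}_1,\dots,\mathcal{P}^{\mathfrak{h}}_{\nu_{\mathfrak{h}-1}}$ are defined, with $\nu_{\mathfrak{h}-1}\ge2$. Then define: - $\mathbb{H}(\mathcal{P}^{\mathfrak{h}}_i):=\min_{\mathcal{P}^{\mathfrak{h}}_i}\mathbb{H}$; - $\mathscr{P}^{\star,\mathfrak{h}}:=\{\mathcal{P}^{\mathfrak{h}}_i:i\in[1,\nu_{\mathfrak{h}-1}]\}$; - $\breve{\mathcal{P}}^{\mathfrak{h}}_i:=\bigcup_{j\ne i}\mathcal{P}^{\mathfrak{h}}_j$; - $\Gamma^{\mathfrak{h}}_i:=\Phi(\mathcal{P}^{\mathfrak{h}}_i,\breve{\mathcal{P}}^{\mathfrak{h}}_i)-\mathbb{H}(\mathcal{P}^{\mathfrak{h}}_i)$ and $\Gamma^{\star,\mathfrak{h}}:=\min_i\Gamma_i^{\mathfrak{h}}$; - $\mathcal{V}^{\mathfrak{h}}_i:=\{\eta\in\Omega:\Phi(\mathcal{P}^{\mathfrak{h}}_i,\eta)-\mathbb{H}(\mathcal{P}^{\mathfrak{h}}_i)<\Gamma^{\mathfrak{h}}_i\}$.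 Set $\mathscr{C}^1:=\{\mathcal{V}^1_i:i\in[1,\nu_0]\}$. For $\mathfrak{h}\ge2$, set $$\mathscr{C}^{\mathfrak{h}}:=\{\mathcal{V}^{\mathfrak{h}}_i:i\in[1,\nu_{\mathfrak{h}-1}]\}\cup\{\mathcal{C}\in\mathscr{C}^{\star,\mathfrak{h}-1}_{\rm tr}\cup\mathscr{C}^{\sharp,\mathfrak{h}-1}:\mathcal{C}\cap\mathcal{V}^{\mathfrak{h}}_i=\emptyset\ \forall i\}.$$ Apply (C) to $(\mathscr{C}^{\mathfrak{h}},\Gamma^{\star,\mathfrak{h}})$. Write $\mathscr{C}^{\star,\mathfrak{h}}:=(\mathscr{C}^{\mathfrak{h}})^\star$ and $\mathscr{C}^{\sharp,\mathfrak{h}}:=(\mathscr{C}^{\mathfrak{h}})^\sharp$. Let $\mathfrak{X}^{\star,\mathfrak{h}}$ be the trace chain of (C) on $\mathscr{P}^{(\mathscr{C}^{\mathfrak{h}})^\star}$. Decompose $\mathscr{P}^{(\mathscr{C}^{\mathfrak{h}})^\star}$ into the closed communicating classes $\mathscr{P}^{\star,\mathfrak{h}}_1,\dots,\mathscr{P}^{\star,\mathfrak{h}}_{\nu_{\mathfrak{h}}}$ of $\mathfrak{X}^{\star,\mathfrak{h}}$ and the set $\mathscr{P}^{\star,\mathfrak{h}}_{\rm tr}$ of transient elements. Let $\mathscr{C}^{\star,\mathfrak{h}}_m:=\{\mathcal{C}\in\mathscr{C}^{\star,\mathfrak{h}}:\mathcal{F}(\mathcal{C})\in\mathscr{P}^{\star,\mathfrak{h}}_m\}$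 for $m\in\{1,\dots,\nu_{\mathfrak{h}},{\rm tr}\}$. If $\nu_{\mathfrak{h}}\ge2$, define $\mathcal{P}^{\mathfrak{h}+1}_i:=\bigcup_{\mathcal{P}\in\mathscr{P}^{\star,\mathfrak{h}}_i}\mathcal{P}$ for $i\in[1,\nu_{\mathfrak{h}}]$ and continue to level $\mathfrak{h}+1$. The terminal level $\mathfrak{m}$ is the first $\mathfrak{h}$ with $\nu_{\mathfrak{h}}=1$. Finally, $\mathscr{P}^{\star,\mathfrak{h}}_{\rm rec}:=\mathscr{P}^{\star,\mathfrak{h}}_1\cup\dots\cup\mathscr{P}^{\star,\mathfrak{h}}_{\nu_{\mathfrak{h}}}$. Here $[a,b]$ denotes the set of integers from $a$ to $b$. *)

From HB Require Import structures.
From mathcomp Require Import all_boot all_order all_algebra.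
From mathcomp Require boolp classical_sets.
From mathcomp Require Import reals constructive_ereal.
Set Implicit Arguments. Unset Strict Implicit. Unset Printing Implicit Defensive.
Import Order.TTheory GRing.Theory Num.Theory.
Local Open Scope ring_scope.

Section Hierarchy.
Variables (R : realType) (T : finType) (e : rel T) (H : T -> R).

Definition height (x : T) (p : seq T) : R := \big[Num.max/H x]_(y <- p) H y.

(* Phi(x,y) = min over paths x -> y of their heights (inf = min: finitely many values) *)
Definition Phi (x y : T) : R :=
  inf (fun r => exists p : seq T, [/\ path e x p, last x p = y & r = height x p]).

Definition PhiS (A B : {set T}) : R :=
  inf (fun r => exists x y, [/\ x \in A, y \in B & r = Phi x y]).

Definition ground : {set T} := [set x | [forall y, H x <= H y]].

Definition Phibar : R :=
  sup (fun r => exists s s', [/\ s \in ground, s' \in ground & r = Phi s s']).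

Definition Omegabar : {set T} := [set x | PhiS ground [set x] <= Phibar].

Definition Fmin (A : {set T}) : {set T} := [set x in A | [forall y in A, H x <= H y]].

Definition bd (A : {set T}) : {set T} := [set x | (x \notin A) && [exists y in A, e x y]].

Definition bdstar (A : {set T}) : {set T} := Fmin (bd A).

Definition connectedb (A : {set T}) : bool :=
  [forall x in A, forall y in A,
     connect [rel u v | [&& e u v, u \in A & v \in A]] x y].

Definition stable_plateau (P : {set T}) : bool :=
  [&& P != set0, connectedb P,
      [forall x in P, forall y in P, H x == H y] &
      [forall x in P, forall y in bd P, H x < H y]].

Definition minH (A : {set T}) : R := inf (fun r => exists2 x, x \in A & r = H x).

(* depth of a cycle, with min over an empty boundary = +oo *)
Definition depth (C : {set T}) : \bar R :=
  ((\big[Order.min/+oo%E]_(x in bd C) (H x)%:E) - (minH C)%:E)%E.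

Section Construction.
Variables (Cs : {set {set T}}) (Gs : R).

Definition Cstar : {set {set T}} := [set C in Cs | (Gs%:E <= depth C)%E].
Definition Csharp : {set {set T}} := [set C in Cs | (depth C < Gs%:E)%E].
Definition Delta : {set T} := Omegabar :\: \bigcup_(C in Cs) C.

(* States of X^C: inl eta for eta in Delta, inr (F C) for C in Cs. *)
Definition rateC (x y : T + {set T}) : R :=
  match x, y with
  | inl a, inl b => if [&& a \in Delta, b \in Delta, e a b & H b <= H a] then 1 else 0
  | inl a, inr P =>
      if a \in Delta then
        \sum_(C in Cs | Fmin C == P)
           (if a \in bd C then #|[set z in C | e a z]|%:R else 0)
      else 0
  | inr P, inl a =>
      if a \in Delta then
        \sum_(C in Cs | Fmin C == P)
           (if (depth C <= Gs%:E)%E && (a \in bdstar C)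
            then #|[set z in C | e a z]|%:R / #|P|%:R else 0)
      else 0
  | inr _, inr _ => 0
  end.

Definition jumpP (x y : T + {set T}) : R := rateC x y / (\sum_z rateC x z).

Fixpoint hitn (a : T + {set T}) (A : {set (T + {set T})}) (n : nat) (x : T + {set T}) : R :=
  if x \in A then (x == a)%:R else
  match n with
  | 0 => 0
  | n'.+1 => \sum_y jumpP x y * hitn a A n' y
  end.

(* P_x [ T_a = T_A ]  (first entrance into A happens at a) *)
Definition hitprob (a : T + {set T}) (A : {set (T + {set T})}) (x : T + {set T}) : R :=
  sup (fun r => exists n, r = hitn a A n x).

Definition Pstar : {set {set T}} := [set Fmin C | C in Cstar].
Definition Astar : {set (T + {set T})} := [set (inr P : T + {set T}) | P in Pstar].

(* rates of the trace chain on P^{C*} *)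
Definition trate (P Q : {set T}) : R :=
  if P == Q then 0 else
  \sum_(a in Delta) rateC (inr P) (inl a) * hitprob (inr Q) Astar (inl a).

Definition trel : rel {set T} := [rel P Q | [&& P \in Pstar, Q \in Pstar & 0 < trate P Q]].
Definition reach (P Q : {set T}) : bool := connect trel P Q.

Definition commclass (K : {set {set T}}) : bool :=
  [exists P in Pstar, K == [set Q in Pstar | reach P Q && reach Q P]].
Definition closedclass (K : {set {set T}}) : bool :=
  [forall P in K, forall Q in Pstar, (0 < trate P Q) ==> (Q \in K)].

Definition classes : {set {set {set T}}} := [set K | commclass K && closedclass K].
Definition recP : {set {set T}} := \bigcup_(K in classes) K.
End Construction.

Section Level.
Variable (Ps : {set {set T}}).
Definition breve (P : {set T}) : {set T} := \bigcup_(Q in Ps | Q != P) Q.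
Definition Gam (P : {set T}) : R := PhiS P (breve P) - minH P.
Definition Gstar : R := inf (fun r => exists2 P, P \in Ps & r = Gam P).
Definition Vset (P : {set T}) : {set T} := [set x | PhiS P [set x] - minH P < Gam P].
(* C^h from the current plateaux Ps and the leftover cycles L of the previous level *)
Definition Cs_of (L : {set {set T}}) : {set {set T}} :=
  [set Vset P | P in Ps] :|: [set C in L | [forall P in Ps, [disjoint C & Vset P]]].
End Level.

Definition Plateaux1 : {set {set T}} := [set P | stable_plateau P && (P \subset Omegabar)].

(* one step: (plateaux of level h, leftover cycles C^{*,h-1}_tr u C^{#,h-1})
   |-> the same data at level h+1 *)
Definition step (d : {set {set T}} * {set {set T}}) : {set {set T}} * {set {set T}} :=
  let Cs := Cs_of d.1 d.2 in
  let G := Gstar d.1 in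
  ([set \bigcup_(Q in K) Q | K : {set {set T}} in classes Cs G],
   [set C in Cstar Cs G | Fmin C \notin recP Cs G] :|: Csharp Cs G).

(* data at level h (h >= 1) *)
Definition level (h : nat) := iter h.-1 step (Plateaux1, set0).
Definition CsL (h : nat) := Cs_of (level h).1 (level h).2.
Definition GsL (h : nat) := Gstar (level h).1.
Definition nu (h : nat) : nat := #|classes (CsL h) (GsL h)|.
Definition recL (h : nat) : {set {set T}} := recP (CsL h) (GsL h).

End Hierarchy.

From HB Require Import structures.
From mathcomp Require Import all_boot all_order all_algebra.
From mathcomp Require boolp classical_sets.
From mathcomp Require Import reals constructive_ereal lra.
Import Order.TTheory GRing.Theory Num.Theory.
Local Open Scope ring_scope.

Set Implicit Arguments. Unset Strict Implicit. Unset Printing Implicit Defensive.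

(* Fix a ground state [s].  At every level the plateau containing [s] lies in
   its valley [V] (the states it reaches below its escape height), and [V] is a
   cycle with bottom [H s] and depth at least [Gamma*].  In the reduced chain
   energy never increases on [Delta] and a cycle deeper than [Gamma*] is never
   left, so a trace transition out of [F(V)] exits through a lowest boundary
   point, at height [L = H s + Gamma*].  The boundary of every cycle of [C*] lies
   at height at least [L], hence a trajectory from such an exit to another bottom
   [F(C')] stays at height exactly [L], where every jump is reversible: [F(C')]
   leads back to [F(V)], and [C'] has bottom [H s] again.  So the communicating
   class of [F(V)] is closed, and the union of its members is a plateau of the
   next level containing [s].  The valleys of distinct plateaux are disjoint
   cycles, which lets the argument repeat along the hierarchy. *)

Section FiniteExtrema.
Variable R : realType.
Implicit Types E : classical_sets.set R.

Lemma fin_image_bounded (I : finType) (f : I -> R) E :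
  (forall r, E r -> exists i, r = f i) -> forall r, E r -> `|r| <= \sum_i `|f i|.
Proof.
move=> Ef r /Ef [i ->].
by rewrite (bigD1 i) //= lerDl sumr_ge0.
Qed.

Lemma inf_fin_attained (I : finType) (f : I -> R) E :
  (forall r, E r -> exists i, r = f i) -> (exists r, E r) ->
  exists r, [/\ E r, inf E = r & forall r', E r' -> r <= r'].
Proof.
move=> Ef [r0 /[dup] Er0 /Ef [i0 r0E]].
have Ei0 : boolp.asbool (E (f i0)) by apply/boolp.asboolP; rewrite -r0E.
case: (@arg_minP _ _ _ i0 (fun i => boolp.asbool (E (f i))) f Ei0).
move=> i /boolp.asboolP Ei imin.
have f_lb r' : E r' -> f i <= r'.
  by move=> Er'; have [j r'E] := Ef _ Er'; subst r'; apply: imin; apply/boolp.asboolP.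
exists (f i); split => //; apply/eqP; rewrite eq_le; apply/andP; split.
- apply: (@ge_inf R E) Ei; exists (- \sum_j `|f j|) => x Ex.
  by rewrite lerNl; apply: le_trans (fin_image_bounded Ef Ex); rewrite -normrN ler_norm.
- by apply: lb_le_inf; [exists (f i) | move=> x /f_lb].
Qed.

Lemma sup_fin_ub (I : finType) (f : I -> R) E :
  (forall r, E r -> exists i, r = f i) -> forall r, E r -> r <= sup E.
Proof.
move=> Ef r Er; apply: (@sup_upper_bound R E) => //; split; first by exists r.
exists (\sum_j `|f j|) => x Ex; exact: le_trans (ler_norm x) (fin_image_bounded Ef Ex).
Qed.

Lemma psumr_gt0P (I : finType) (P : pred I) (F : I -> R) :
  (forall i, P i -> 0 <= F i) ->
  reflect (exists i, P i && (0 < F i)) (0 < \sum_(i | P i) F i).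
Proof.
move=> F_ge0; apply: (iffP idP) => [s_gt0|[i /andP[Pi Fi_gt0]]].
  by apply: psumr_neq0P => //; apply/eqP; rewrite gt_eqF.
rewrite (bigD1 i) //=; apply: lt_le_trans Fi_gt0 _.
by rewrite lerDl sumr_ge0 // => j /andP[/F_ge0].
Qed.

End FiniteExtrema.

Section CommunicationHeight.
Variables (R : realType) (T : finType) (e : rel T) (H : T -> R).
Hypothesis e_sym : symmetric e.
Hypothesis e_connected : forall x y, connect e x y.

Local Notation Phi := (Phi e H).
Local Notation PhiS := (PhiS e H).

Lemma height_le x p r : (height H x p <= r) = all (fun y => H y <= r) (x :: p).
Proof.
rewrite /height; elim: p => [|y p IH]; first by rewrite big_nil /= andbT.
by rewrite big_cons ge_max IH /= andbCA.
Qed.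

Lemma height_mem x p : exists2 t, t \in x :: p & height H x p = H t.
Proof.
rewrite /height; elim: p => [|y p [t t_in IH]]; first by exists x; rewrite ?big_nil ?mem_head.
rewrite big_cons IH; have [_|_] := leP (H y) (H t).
- by exists t; rewrite // !inE; move: t_in; rewrite inE => /orP[]->; rewrite ?orbT.
- by exists y; rewrite // !inE eqxx orbT.
Qed.

Lemma le_height x p t : t \in x :: p -> H t <= height H x p.
Proof. by move: (lexx (height H x p)); rewrite {1}height_le => /allP; apply. Qed.

Lemma Phi_attained x y : exists p, [/\ path e x p, last x p = y, Phi x y = height H x p &
  forall q, path e x q -> last x q = y -> height H x p <= height H x q].
Proof.
pose E r := exists p, [/\ path e x p, last x p = y & r = height H x p].
have E_fin r : E r -> exists t, r = H t.
  by move=> [p [_ _ ->]]; have [t _ ->] := height_mem x p; exists t.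
have E_ne : exists r, E r.
  by have /connectP [p xp yE] := e_connected x y; exists (height H x p), p.
have [r [[p [xp py ->]] PhiE p_min]] := inf_fin_attained E_fin E_ne.
by exists p; split => // q xq qy; apply: p_min; exists q.
Qed.

Lemma Phi_le_height x y q : path e x q -> last x q = y -> Phi x y <= height H x q.
Proof. by have [p [_ _ -> p_min]] := Phi_attained x y; apply: p_min. Qed.

Lemma Phi_le_path x y r : Phi x y <= r ->
  exists p, [/\ path e x p, last x p = y & all (fun t => H t <= r) (x :: p)].
Proof. by have [p [xp py -> _]] := Phi_attained x y; rewrite height_le; exists p. Qed.

Lemma Phi_ge_dst x y : H y <= Phi x y.
Proof. by have [p [_ py -> _]] := Phi_attained x y; rewrite -py le_height ?mem_last. Qed.

Lemma Phixx x : Phi x x = H x.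
Proof.
apply/eqP; rewrite eq_le Phi_ge_dst andbT.
by have := @Phi_le_height x x [::] erefl erefl; rewrite /height big_nil.
Qed.

Lemma Phi_le_max x y z : Phi x z <= Num.max (Phi x y) (Phi y z).
Proof.
have [p [xp py -> _]] := Phi_attained x y; have [q [yq qz -> _]] := Phi_attained y z.
have xpq : path e x (p ++ q) by rewrite cat_path xp py.
apply: le_trans (Phi_le_height xpq _) _; first by rewrite last_cat py.
rewrite height_le; apply/allP => t; rewrite -cat_cons mem_cat le_max => /orP[tp|tq].
  by rewrite le_height.
by rewrite (@le_height y q) ?orbT // inE tq orbT.
Qed.

Lemma PhiC x y : Phi x y = Phi y x.
Proof.
suff Phi_sym_le u v : Phi v u <= Phi u v by apply/eqP; rewrite eq_le !Phi_sym_le.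
have [p [up pv -> _]] := Phi_attained u v.
have rev_path : path e (last u p) (rev (belast u p)).
  by rewrite rev_path; apply: sub_path up => a b; rewrite e_sym.
have rev_last : last (last u p) (rev (belast u p)) = u.
  by case: p {up pv rev_path} => //= w p; rewrite rev_cons last_rcons.
rewrite -pv; apply: le_trans (Phi_le_height rev_path rev_last) _.
rewrite height_le; apply/allP => t; rewrite inE mem_rev => /orP[/eqP->|tp].
  by rewrite le_height ?mem_last.
by rewrite le_height // lastI mem_rcons inE tp orbT.
Qed.

Lemma Phi_le_edge x y z : e y z -> Phi x z <= Num.max (Phi x y) (H z).
Proof.
move=> eyz; apply: le_trans (Phi_le_max x y z) _.
rewrite ge_max le_max lexx /=.
have := @Phi_le_height y z [:: z]; rewrite /= eyz => /(_ erefl erefl).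
rewrite /height big_cons big_nil => /le_trans; apply.
by rewrite ge_max le_max lexx orbT /= le_max Phi_ge_dst.
Qed.

Lemma PhiS_attained (A B : {set T}) : A != set0 -> B != set0 ->
  exists x y, [/\ x \in A, y \in B, PhiS A B = Phi x y &
     forall x' y', x' \in A -> y' \in B -> Phi x y <= Phi x' y'].
Proof.
case/set0Pn => a aA; case/set0Pn => b bB.
pose E r := exists x y, [/\ x \in A, y \in B & r = Phi x y].
have E_fin r : E r -> exists xy : T * T, r = Phi xy.1 xy.2.
  by move=> [x [y [_ _ ->]]]; exists (x, y).
have E_ne : exists r, E r by exists (Phi a b), a, b.
have [r [[x [y [xA yB ->]]] PhiSE xy_min]] := inf_fin_attained E_fin E_ne.
by exists x, y; split => // x' y' x'A y'B; apply: xy_min; exists x', y'.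
Qed.

Lemma PhiS_le (A B : {set T}) x y : x \in A -> y \in B -> PhiS A B <= Phi x y.
Proof.
move=> xA yB; have A0 : A != set0 by apply/set0Pn; exists x.
have B0 : B != set0 by apply/set0Pn; exists y.
by have [x0 [y0 [_ _ -> xy_min]]] := PhiS_attained A0 B0; apply: xy_min.
Qed.

Lemma minH_attained (A : {set T}) : A != set0 ->
  exists2 x, x \in A & minH H A = H x /\ forall y, y \in A -> H x <= H y.
Proof.
case/set0Pn => a aA; pose E r := exists2 x, x \in A & r = H x.
have E_fin r : E r -> exists x, r = H x by move=> [x _ ->]; exists x.
have E_ne : exists r, E r by exists (H a), a.
have [r [[x xA ->] minHE x_min]] := inf_fin_attained E_fin E_ne.
by exists x => //; split => // y yA; apply: x_min; exists y.
Qed.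

Lemma minH_le (A : {set T}) y : y \in A -> minH H A <= H y.
Proof.
move=> yA; have A0 : A != set0 by apply/set0Pn; exists y.
by have [x _ [-> x_min]] := minH_attained A0; apply: x_min.
Qed.

Lemma minH_ground (A : {set T}) s : (forall y, H s <= H y) -> s \in A -> minH H A = H s.
Proof.
move=> s_min sA; have A0 : A != set0 by apply/set0Pn; exists s.
have [x _ [-> x_min]] := minH_attained A0.
by apply/le_anti; rewrite x_min ?s_min.
Qed.

End CommunicationHeight.

Section Depth.
Variables (R : realType) (T : finType) (e : rel T) (H : T -> R).
Implicit Types C : {set T}.

Lemma Fmin_sub C : Fmin H C \subset C.
Proof. by apply/subsetP => x; rewrite inE => /andP[]. Qed.

Lemma Fmin_neq0 C : C != set0 -> Fmin H C != set0.
Proof.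
move=> /(minH_attained H) [x xC [_ x_min]]; apply/set0Pn; exists x.
by rewrite inE xC; apply/forall_inP.
Qed.

Lemma bdstarP C x : x \in bdstar e H C -> x \in bd e C /\ forall y, y \in bd e C -> H x <= H y.
Proof. by rewrite inE => /andP[xb /forall_inP]. Qed.

Lemma depth_bdstar C x : x \in bdstar e H C -> depth e H C = (H x - minH H C)%:E.
Proof.
move=> /bdstarP [xb x_min]; rewrite /depth EFinB; congr (_ - _)%E.
apply/le_anti; rewrite (bigmin_le_cond _ _ xb) /=.
by apply: le_bigmin => [|y yb]; rewrite ?leey // lee_fin x_min.
Qed.

Lemma le_depthP C r :
  (r%:E <= depth e H C)%E <-> forall y, y \in bd e C -> minH H C + r <= H y.
Proof.
split=> [r_le y yb|bd_ge].
  have : bdstar e H C != set0 by apply: Fmin_neq0; apply/set0Pn; exists y.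
  case/set0Pn => x xs; move: r_le; rewrite (depth_bdstar xs) lee_fin => r_le.
  have [_ x_min] := bdstarP xs; apply: le_trans (x_min _ yb).
  by rewrite addrC -lerBrDr.
have : ((minH H C + r)%:E <= \big[Order.min/+oo%E]_(x in bd e C) (H x)%:E)%E.
  by apply: le_bigmin => [|y yb]; rewrite ?leey // lee_fin bd_ge.
rewrite /depth; case: (\big[Order.min/+oo%E]_(x in bd e C) _) => [b| |] //=.
  by rewrite !lee_fin => h; lra.
by rewrite addye ?leey.
Qed.

End Depth.

Section ReducedChain.
Variables (R : realType) (T : finType) (e : rel T) (H : T -> R).
Variables (Cs : {set {set T}}) (Gs : R).
Hypothesis Cs_neq0 : forall C, C \in Cs -> C != set0.

Local Notation rate := (rateC e H Cs Gs).
Local Notation jump := (jumpP e H Cs Gs).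
Local Notation hit := (hitn e H Cs Gs).
Local Notation Delta := (Delta e H Cs).

Lemma card_nbrs_gt0 (C : {set T}) a : a \in bd e C -> 0 < #|[set z in C | e a z]|%:R :> R.
Proof.
rewrite inE => /andP[_ /exists_inP [z zC eaz]]; rewrite ltr0n card_gt0.
by apply/set0Pn; exists z; rewrite inE zC.
Qed.

Lemma rateC_ge0 x y : 0 <= rate x y.
Proof.
case: x y => [a|P] [b|Q] //=; first by case: ifP.
- by case: ifP => // _; apply: sumr_ge0 => C _; case: ifP.
- by case: ifP => // _; apply: sumr_ge0 => C _; case: ifP => // _; apply: divr_ge0.
Qed.

Lemma rateC_ll_gt0 a b :
  (0 < rate (inl a) (inl b)) = [&& a \in Delta, b \in Delta, e a b & H b <= H a].
Proof. by rewrite /=; case: ifP; rewrite ?ltr01 ?ltxx. Qed.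

Lemma rateC_lr_gt0P a P : 0 < rate (inl a) (inr P) <->
  a \in Delta /\ exists C, [/\ C \in Cs, Fmin H C = P & a \in bd e C].
Proof.
rewrite /=; case: ifP => aD; last by split => [|[]]; rewrite ?ltxx.
rewrite -(rwP (psumr_gt0P _)); last by move=> C _; case: ifP.
split => [[C /andP[/andP[CCs /eqP FC]]]|[_ [C [CCs FC aC]]]].
  by case: ifP => [aC _|]; [split => //; exists C | rewrite ltxx].
by exists C; rewrite CCs FC eqxx aC card_nbrs_gt0.
Qed.

Lemma rateC_rl_gt0P P a : 0 < rate (inr P) (inl a) <->
  a \in Delta /\
  exists C, [/\ C \in Cs, Fmin H C = P, (depth e H C <= Gs%:E)%E & a \in bdstar e H C].
Proof.
rewrite /=; case: ifP => aD; last by split => [|[]]; rewrite ?ltxx.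
rewrite -(rwP (psumr_gt0P _)); last by move=> C _; case: ifP => // _; apply: divr_ge0.
split => [[C /andP[/andP[CCs /eqP FC]]]|[_ [C [CCs FC dC aC]]]].
  by case: ifP => [/andP[dC aC] _|]; [split => //; exists C | rewrite ltxx].
exists C; rewrite CCs FC eqxx dC aC /=; apply: divr_gt0.
  by apply: card_nbrs_gt0; move: aC; rewrite inE => /andP[].
by rewrite ltr0n card_gt0 -FC Fmin_neq0 ?Cs_neq0.
Qed.

Lemma jumpP_ge0 x y : 0 <= jump x y.
Proof. by apply: divr_ge0; [|apply: sumr_ge0 => z _]; apply: rateC_ge0. Qed.

Lemma jumpP_gt0 x y : (0 < jump x y) = (0 < rate x y).
Proof.
have rate_le_sum : rate x y <= \sum_z rate x z.
  by rewrite (bigD1 y) //= lerDl sumr_ge0 // => z _; apply: rateC_ge0.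
apply/idP/idP => [|rate_gt0]; last by apply: divr_gt0 => //; apply: lt_le_trans rate_le_sum.
apply: contraTT; rewrite -!leNgt => rate_le0.
have rate0 : rate x y = 0 by apply/le_anti; rewrite rate_le0 rateC_ge0.
by rewrite /jumpP rate0 mul0r.
Qed.

Lemma sum_jumpP_le1 x : \sum_y jump x y <= 1.
Proof.
rewrite /jumpP -mulr_suml.
by have [->|?] := eqVneq (\sum_z rate x z) 0; rewrite ?invr0 ?mulr0 ?ler01 ?mulfV.
Qed.

Implicit Types (A : {set T + {set T}}) (n : nat).

Lemma hitn_in a A n x : x \in A -> hit a A n x = (x == a)%:R.
Proof. by case: n => [|n] /= ->. Qed.

Lemma hitn_ge0_le1 a A n x : 0 <= hit a A n x <= 1.
Proof.
elim: n x => [|n IH] x; have [xA|xA] := boolP (x \in A);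
  try by rewrite hitn_in // ler0n lern1 leq_b1.
  by rewrite /= (negbTE xA) lexx ler01.
rewrite /= (negbTE xA); apply/andP; split.
  by apply: sumr_ge0 => y _; apply: mulr_ge0 (jumpP_ge0 _ _) _; case/andP: (IH y).
apply: le_trans (sum_jumpP_le1 x); apply: ler_sum => y _.
by rewrite ler_piMr ?jumpP_ge0 //; case/andP: (IH y).
Qed.

Lemma hitn_ge0 a A n x : 0 <= hit a A n x.
Proof. by case/andP: (hitn_ge0_le1 a A n x). Qed.

Lemma hitn_gt0_step a A n x : x \notin A ->
  0 < hit a A n.+1 x <-> exists y, 0 < rate x y /\ 0 < hit a A n y.
Proof.
move=> xA; rewrite /= (negbTE xA).
have terms_ge0 y : true -> 0 <= jump x y * hit a A n y.
  by move=> _; rewrite mulr_ge0 ?jumpP_ge0 ?hitn_ge0.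
split => [/(psumr_gt0P terms_ge0) [y /= prod_gt0]|[y [rxy hy]]].
  have jump_gt0 : 0 < jump x y.
    by rewrite lt0r jumpP_ge0 andbT; move: prod_gt0; apply: contraTneq => ->; rewrite mul0r ltxx.
  by rewrite (pmulr_rgt0 _ jump_gt0) in prod_gt0; exists y; rewrite -jumpP_gt0.
by apply/(psumr_gt0P terms_ge0); exists y; rewrite mulr_gt0 ?jumpP_gt0.
Qed.

Lemma has_sup_hitn a A x : classical_sets.has_sup (fun r => exists n, r = hit a A n x).
Proof.
split; first by exists (hit a A 0 x), 0%N.
by exists 1 => r [k ->]; case/andP: (hitn_ge0_le1 a A k x).
Qed.

Lemma hitprob_ge0 a A x : 0 <= hitprob e H Cs Gs a A x.
Proof.
by apply: le_trans (hitn_ge0 a A 0 x) (sup_upper_bound (has_sup_hitn a A x) _); exists 0%N.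
Qed.

Lemma hitprob_gt0P a A x : 0 < hitprob e H Cs Gs a A x <-> exists n, 0 < hit a A n x.
Proof.
have hit_ub := has_sup_hitn a A x.
split => [sup_gt0|[n hn]]; last by apply: lt_le_trans hn (sup_upper_bound hit_ub _); exists n.
apply: boolp.contrapT => no_hit; move: sup_gt0; apply/negP; rewrite -leNgt.
apply: ge_sup; first by case: hit_ub.
by move=> r [n ->]; rewrite leNgt; apply/negP => hn; apply: no_hit; exists n.
Qed.

End ReducedChain.

Section Recurrence.
Variables (R : realType) (T : finType) (e : rel T) (H : T -> R).
Hypothesis e_sym : symmetric e.
Variables (Cs : {set {set T}}) (Gs : R).
Hypothesis Cs_neq0 : forall C, C \in Cs -> C != set0.
Hypothesis Cs_disjoint :
  forall C1 C2, C1 \in Cs -> C2 \in Cs -> C1 != C2 -> [disjoint C1 & C2].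
Variable m : R.
Hypothesis m_le_H : forall y, m <= H y.

Local Notation rate := (rateC e H Cs Gs).
Local Notation hit := (hitn e H Cs Gs).
Local Notation Astar := (Astar e H Cs Gs).
Local Notation Pstar := (Pstar e H Cs Gs).
Local Notation trate := (trate e H Cs Gs).
Local Notation trel := (trel e H Cs Gs).

Let rate_lr := rateC_lr_gt0P e H Cs Gs.
Let rate_rl := @rateC_rl_gt0P _ _ e H Cs Gs Cs_neq0.
Let hit_step := hitn_gt0_step e H Cs Gs.

Lemma Fmin_inj C1 C2 : C1 \in Cs -> C2 \in Cs -> Fmin H C1 = Fmin H C2 -> C1 = C2.
Proof.
move=> C1s C2s FE; have /set0Pn [z zF1] := Fmin_neq0 H (Cs_neq0 C1s).
have zF2 : z \in Fmin H C2 by rewrite -FE.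
apply/eqP/negPn/negP => /(Cs_disjoint C1s C2s) /pred0P /(_ z) /=.
by rewrite (subsetP (Fmin_sub H C1) _ zF1) (subsetP (Fmin_sub H C2) _ zF2).
Qed.

Lemma m_le_minH C : C \in Cs -> m <= minH H C.
Proof. by move=> /Cs_neq0 /(minH_attained H) [x _ [-> _]]. Qed.

(* [L] is the lowest exit height of a cycle of depth at least [Gs] bottoming at [m]. *)
Let L := m + Gs.

Definition below_barrier (x : T + {set T}) : Prop :=
  match x with
  | inl u => H u <= L
  | inr P => forall C, C \in Cs -> Fmin H C = P -> exists2 z, z \in bd e C & H z <= L
  end.

Definition above_barrier (x : T + {set T}) : Prop :=
  match x with
  | inl u => L <= H u
  | inr P => forall C, C \in Cs -> Fmin H C = P -> forall z, z \in bd e C -> L <= H z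
  end.

Lemma below_barrier_rate x y : 0 < rate x y -> below_barrier x -> below_barrier y.
Proof.
case: x y => [u|P] [v|Q]; last by rewrite /= ltxx.
- by rewrite rateC_ll_gt0 => /and4P [_ _ _ hvu] /(le_trans hvu).
- move=> /rate_lr [_ [C0 [C0s FC0 ub]]] hu C Cs' FC.
  by rewrite -(Fmin_inj C0s Cs' (etrans FC0 (esym FC))); exists u.
- move=> /rate_rl [_ [C [Cs' FC _ /bdstarP [_ v_min]]]] hP.
  by have [z zb /(le_trans (v_min _ zb))] := hP C Cs' FC.
Qed.

Lemma above_barrier_rate x y : 0 < rate x y -> above_barrier y -> above_barrier x.
Proof.
case: x y => [u|P] [v|Q]; last by rewrite /= ltxx.
- by rewrite rateC_ll_gt0 => /and4P [_ _ _ hvu] hv; apply: le_trans hv hvu.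
- by move=> /rate_lr [_ [C0 [C0s FC0 ub]]] hQ; apply: hQ C0 C0s FC0 u ub.
- move=> /rate_rl [_ [C0 [C0s FC0 _ /bdstarP [_ v_min]]]] hv C Cs' FC.
  rewrite -(Fmin_inj C0s Cs' (etrans FC0 (esym FC))) => z zb.
  exact: le_trans hv (v_min _ zb).
Qed.

(* When a cycle is entered from [u] below the barrier, [u] is a lowest
   boundary point, so the cycle may be left through it. *)
Lemma rateC_rev x y : 0 < rate x y -> below_barrier x -> above_barrier y -> 0 < rate y x.
Proof.
case: x y => [u|P] [v|Q]; last by rewrite /= ltxx.
- rewrite !rateC_ll_gt0 => /and4P [uD vD euv _] hu hv.
  by rewrite vD uD e_sym euv (le_trans hu hv).
- move=> /rate_lr [uD [C [Cs' FC ub]]] hu hQ; apply/rate_rl; split => //.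
  have us : u \in bdstar e H C.
    by rewrite inE ub; apply/forall_inP => y yb; apply: le_trans hu (hQ C Cs' FC y yb).
  exists C; split => //; rewrite (depth_bdstar us) lee_fin lerBlDl.
  by apply: le_trans hu _; rewrite /L lerD2r m_le_minH.
- move=> /rate_rl [vD [C [Cs' FC _ /bdstarP [vb _]]]] _ _.
  by apply/rate_lr; split => //; exists C.
Qed.

Lemma inl_notin_Astar u : inl u \notin Astar.
Proof. by apply/imsetP => [[P _]]. Qed.

Lemma inr_in_Astar P : (inr P \in Astar) = (P \in Pstar).
Proof. by apply/imsetP/idP => [[P' P's [->]] //|P's]; exists P. Qed.

Lemma PstarP P : P \in Pstar -> exists C, [/\ C \in Cs, (Gs%:E <= depth e H C)%E & Fmin H C = P].
Proof. by case/imsetP => C; rewrite inE => /andP[Cs' dC] ->; exists C. Qed.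

Lemma above_barrier_Pstar Q : Q \in Pstar -> above_barrier (inr Q).
Proof.
move=> /PstarP [C' [C's /le_depthP C'_deep FC']] C Cs' FC z zb.
rewrite -(Fmin_inj C's Cs' (etrans FC' (esym FC))) in zb.
by apply: le_trans (C'_deep z zb); rewrite /L lerD2r m_le_minH.
Qed.

Lemma hitn_above_barrier Q n x : Q \in Pstar -> 0 < hit (inr Q) Astar n x -> above_barrier x.
Proof.
move=> Qs; elim: n x => [|n IH] x; have [xA|xA] := boolP (x \in Astar).
1,3: rewrite hitn_in //; case: eqP => [-> _|_]; [exact: above_barrier_Pstar | by rewrite ltxx].
- by rewrite /= (negbTE xA) ltxx.
- move=> /(hit_step _ _ xA) [y [rxy hy]].
  exact: above_barrier_rate rxy (IH y hy).
Qed.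

(* Along a trajectory from [x] to [Q] every state is both below and above
   the barrier, so each jump can be reversed; reading the trajectory backwards
   leads from [Q] back to wherever [x] could go. *)
Lemma hit_return P Q n x : Q \in Pstar -> x \notin Astar -> below_barrier x ->
  0 < hit (inr Q) Astar n x -> (exists k, 0 < hit (inr P) Astar k x) ->
  (exists a, [/\ a \in Delta e H Cs, 0 < rate (inr Q) (inl a) &
                 exists k, 0 < hit (inr P) Astar k (inl a)])
  /\ below_barrier (inr Q).
Proof.
move=> Qs; elim: n x => [|n IH] x xA x_below; first by rewrite /= (negbTE xA) ltxx.
move=> /(hit_step _ _ xA) [y [rxy hy]] [k hk].
have y_below := below_barrier_rate rxy x_below.
have ryx := rateC_rev rxy x_below (hitn_above_barrier Qs hy).
have [yA|yA] := boolP (y \in Astar); last first.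
  by apply: (IH y yA y_below hy); exists k.+1; apply/(hit_step _ _ yA); exists x.
move: hy; rewrite hitn_in //; case: eqP => [yQ _|]; last by rewrite ltxx.
subst y; split => //; case: x xA {x_below IH} rxy ryx hk => [a|P'] _ rxy ryx hk.
  by exists a; split => //; [case/rate_lr: rxy | exists k].
by move: rxy; rewrite /= ltxx.
Qed.

Definition deep_bottom (P : {set T}) :=
  exists C, [/\ C \in Cs, (Gs%:E <= depth e H C)%E, Fmin H C = P & minH H C = m].

Lemma deep_bottom_Pstar P : deep_bottom P -> P \in Pstar.
Proof. by case=> C [Cs' dC <- _]; apply/imsetP; exists C => //; rewrite inE Cs' dC. Qed.

Lemma trate_gt0P P Q : 0 < trate P Q -> P != Q /\
  exists a, [/\ a \in Delta e H Cs, 0 < rate (inr P) (inl a) &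
                0 < hitprob e H Cs Gs (inr Q) Astar (inl a)].
Proof.
rewrite /trate; case: eqP => [_|/eqP neq]; first by rewrite ltxx.
have terms_ge0 a : a \in Delta e H Cs ->
    0 <= rate (inr P) (inl a) * hitprob e H Cs Gs (inr Q) Astar (inl a).
  by move=> _; rewrite mulr_ge0 ?rateC_ge0 ?hitprob_ge0.
move=> /(psumr_gt0P terms_ge0) [a /andP[aD prod_gt0]]; split => //; exists a.
have rate_gt0 : 0 < rate (inr P) (inl a).
  by rewrite lt0r rateC_ge0 andbT; move: prod_gt0; apply: contraTneq => ->; rewrite mul0r ltxx.
by rewrite (pmulr_rgt0 _ rate_gt0) in prod_gt0.
Qed.

(* A deep bottom is left only through boundary points at height exactly [L]. *)
Lemma trate_deep_bottom P Q : deep_bottom P -> Q \in Pstar -> 0 < trate P Q ->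
  deep_bottom Q /\ 0 < trate Q P.
Proof.
move=> [CP [CPs dCP FCP mCP]] Qs /trate_gt0P [neq [a [aD ra hp]]].
have /rate_rl [_ [C [Cs' FC dC as']]] := ra.
rewrite (Fmin_inj Cs' CPs (etrans FC (esym FCP))) in as' dC.
have Ha : H a = L by move: dC dCP; rewrite (depth_bdstar as') !lee_fin mCP /L; lra.
have a_below : below_barrier (inl a) by rewrite /= Ha.
have a_back : exists k, 0 < hit (inr P) Astar k (inl a).
  exists 1%N; apply/(hit_step _ _ (inl_notin_Astar a)); exists (inr P); split.
    by apply/rate_lr; split => //; exists CP; split => //; case: (bdstarP as').
  by rewrite hitn_in ?inr_in_Astar ?eqxx ?ltr01 //; apply: deep_bottom_Pstar; exists CP.
have /hitprob_gt0P [n hn] := hp.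
have [[a' [a'D ra' [k hk]]] Q_below] := hit_return Qs (inl_notin_Astar a) a_below hn a_back.
split.
- have [CQ [CQs dCQ FCQ]] := PstarP Qs; exists CQ; split => //.
  have [z zb hz] := Q_below CQ CQs FCQ; move/le_depthP/(_ z zb): dCQ.
  by have := m_le_minH CQs; move: hz; rewrite /L; lra.
- rewrite /trate eq_sym (negbTE neq); apply/(psumr_gt0P _); last exists a'.
    by move=> b _; rewrite mulr_ge0 ?rateC_ge0 ?hitprob_ge0.
  by rewrite a'D mulr_gt0 //; apply/hitprob_gt0P; exists k.
Qed.

Lemma connect_trel_deep_bottom P0 p X : deep_bottom X -> connect trel X P0 ->
  path trel X p -> deep_bottom (last X p) /\ connect trel (last X p) P0.
Proof.
elim: p X => [|Y p IH] X X_deep X_P0 //= /andP[/and3P [Xs Ys tXY] pY].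
have [Y_deep tYX] := trate_deep_bottom X_deep Ys tXY.
apply: IH => //; apply: connect_trans X_P0; apply: connect1.
by rewrite /trel /= Ys Xs tYX.
Qed.

Lemma deep_bottom_recurrent C0 : C0 \in Cs -> minH H C0 = m -> (Gs%:E <= depth e H C0)%E ->
  Fmin H C0 \in recP e H Cs Gs.
Proof.
move=> C0s mC0 dC0; set P0 := Fmin H C0.
have P0_deep : deep_bottom P0 by exists C0.
have P0s := deep_bottom_Pstar P0_deep.
pose K := [set Q in Pstar | reach e H Cs Gs P0 Q && reach e H Cs Gs Q P0].
have P0K : P0 \in K by rewrite inE P0s /reach connect0.
apply/bigcupP; exists K => //; rewrite inE; apply/andP; split.
  by apply/exists_inP; exists P0.
apply/forall_inP => P; rewrite inE => /and3P [Ps P0P PP0].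
apply/forall_inP => Q Qs; apply/implyP => tPQ.
have P0Q : reach e H Cs Gs P0 Q.
  by apply: connect_trans P0P (connect1 _); rewrite /trel /= Ps Qs tPQ.
rewrite inE Qs P0Q /=; have /connectP [p pp ->] := P0Q.
by case: (connect_trel_deep_bottom P0_deep (connect0 _ _) pp).
Qed.

End Recurrence.

Section Valleys.
Variables (R : realType) (T : finType) (e : rel T) (H : T -> R).
Hypothesis e_sym : symmetric e.
Hypothesis e_connected : forall x y, connect e x y.

Definition plateau_family (Ps : {set {set T}}) :=
  [/\ forall P, P \in Ps -> P != set0,
      forall P Q, P \in Ps -> Q \in Ps -> P != Q -> [disjoint P & Q] &
      forall P u v, P \in Ps -> u \in P -> e u v -> H v <= minH H P -> v \in P].

Definition cycle_family (Cs : {set {set T}}) :=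
  [/\ forall C, C \in Cs -> C != set0,
      forall C1 C2, C1 \in Cs -> C2 \in Cs -> C1 != C2 -> [disjoint C1 & C2] &
      forall C x y, C \in Cs -> x \in C -> y \in bd e C -> H x < H y].

Lemma cycle_family_sub (Cs Cs' : {set {set T}}) :
  Cs' \subset Cs -> cycle_family Cs -> cycle_family Cs'.
Proof.
move=> /subsetP sub [Cs_neq0 Cs_disj Cs_cycle]; split.
- by move=> C /sub; apply: Cs_neq0.
- by move=> C1 C2 /sub C1s /sub; apply: Cs_disj.
- by move=> C x y /sub; apply: Cs_cycle.
Qed.

Lemma path_last_in (S : {set T}) (Q : pred T) x p :
  (forall u v, u \in S -> e u v -> Q v -> v \in S) ->
  x \in S -> path e x p -> all Q p -> last x p \in S.
Proof.
move=> S_closed; elim: p x => [|y p IH] x //= xS /andP[exy yp] /andP[Qy Qp].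
exact: IH (S_closed _ _ xS exy Qy) yp Qp.
Qed.

Variable Ps : {set {set T}}.
Hypothesis Ps_plateaux : plateau_family Ps.
Hypothesis Ps_card : (1 < #|Ps|)%N.

Local Notation Vset := (Vset e H Ps).
Local Notation Gam := (Gam e H Ps).
Local Notation breve := (breve Ps).
Local Notation PhiP P x := (PhiS e H P [set x]).

Lemma Ps_neq0 P : P \in Ps -> P != set0.
Proof. by case: Ps_plateaux => Ps_neq0 _ _; apply: Ps_neq0. Qed.

Lemma breve_neq0 P : P \in Ps -> breve P != set0.
Proof.
move=> Ps_P; have /exists_inP [Q Qs QP] : [exists Q in Ps, Q != P].
  rewrite -negb_forall_in; apply: contraTN Ps_card => /forall_inP all_P.
  rewrite -leqNgt -(cards1 P) subset_leq_card //; apply/subsetP => Q Qs.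
  by rewrite inE -[Q == P]negbK all_P.
have /set0Pn [z zQ] := Ps_neq0 Qs; apply/set0Pn; exists z.
by apply/bigcupP; exists Q; rewrite ?Qs.
Qed.

Lemma Gam_gt0 P : P \in Ps -> 0 < Gam P.
Proof.
move=> Ps_P; rewrite /Gam subr_gt0.
have [x [y [xP yb -> _]]] := PhiS_attained e H (Ps_neq0 Ps_P) (breve_neq0 Ps_P).
rewrite ltNge; apply/negP => /(Phi_le_path e_connected) [p [xp yE /andP[_ p_low]]].
have yP : y \in P.
  rewrite -yE; apply: path_last_in xP xp p_low => u v uP euv hv.
  by case: Ps_plateaux => _ _ P_closed; apply: P_closed Ps_P uP euv hv.
case/bigcupP: yb => Q /andP[Qs QP] yQ.
by case: Ps_plateaux => _ Ps_disj _; rewrite (disjointFr (Ps_disj _ _ Qs Ps_P QP) yQ) in yP.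
Qed.

Implicit Types (P Q : {set T}) (x y : T).

Lemma PhiP_attained P x : P \in Ps -> exists2 p, p \in P & PhiP P x = Phi e H p x.
Proof.
move=> Ps_P; have x_neq0 : [set x] != set0 by apply/set0Pn; exists x; rewrite inE.
have [p [y [pP /set1P -> -> _]]] := PhiS_attained e H (Ps_neq0 Ps_P) x_neq0.
by exists p.
Qed.

Lemma PhiP_le P p x : p \in P -> PhiP P x <= Phi e H p x.
Proof. by move=> pP; apply: PhiS_le; rewrite ?set11. Qed.

Lemma PhiP_ge P x : P \in Ps -> H x <= PhiP P x.
Proof. by move=> Ps_P; have [p _ ->] := PhiP_attained x Ps_P; apply: Phi_ge_dst. Qed.

Lemma PhiP_le_edge P y x : P \in Ps -> e y x -> PhiP P x <= Num.max (PhiP P y) (H x).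
Proof.
move=> Ps_P eyx; have [p pP ->] := PhiP_attained y Ps_P.
exact: le_trans (PhiP_le x pP) (Phi_le_edge H e_connected p eyx).
Qed.

Lemma mem_Vset P x : (x \in Vset P) = (PhiP P x < PhiS e H P (breve P)).
Proof. by rewrite inE /Gam ltrD2r. Qed.

Lemma Vset_bd_ge P y : P \in Ps -> y \in bd e (Vset P) -> PhiS e H P (breve P) <= H y.
Proof.
move=> Ps_P; rewrite inE mem_Vset -leNgt => /andP[y_out /exists_inP [z zV eyz]].
rewrite mem_Vset in zV; rewrite e_sym in eyz.
have := le_trans y_out (PhiP_le_edge Ps_P eyz); rewrite le_max => /orP[z_high|//].
by move: (lt_le_trans zV z_high); rewrite ltxx.
Qed.

Lemma Vset_cycle P x y : P \in Ps -> x \in Vset P -> y \in bd e (Vset P) -> H x < H y.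
Proof.
move=> Ps_P; rewrite mem_Vset => xV yb.
exact: le_lt_trans (PhiP_ge x Ps_P) (lt_le_trans xV (Vset_bd_ge Ps_P yb)).
Qed.

Lemma mem_Vset_min P x : P \in Ps -> x \in P -> H x = minH H P -> x \in Vset P.
Proof.
move=> Ps_P xP xmin; rewrite inE -xmin -(Phixx H e_connected x).
by apply: le_lt_trans (Gam_gt0 Ps_P); rewrite subr_le0 PhiP_le.
Qed.

Lemma Vset_neq0 P : P \in Ps -> Vset P != set0.
Proof.
move=> Ps_P; have [x xP [xmin _]] := minH_attained H (Ps_neq0 Ps_P).
by apply/set0Pn; exists x; rewrite mem_Vset_min.
Qed.

(* If [x] lay in both valleys, [Phi p q <= max (Phi p x) (Phi x q)] would
   fall below both escape heights. *)
Lemma Vset_disjoint P Q : P \in Ps -> Q \in Ps -> P != Q -> [disjoint Vset P & Vset Q].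
Proof.
move=> Ps_P Qs PQ; apply/pred0P => x /=; apply/negP => /andP[].
rewrite !mem_Vset.
have [p pP ->] := PhiP_attained x Ps_P; have [q qQ ->] := PhiP_attained x Qs => hp hq.
have qb : q \in breve P by apply/bigcupP; exists Q; rewrite ?Qs 1?eq_sym.
have pb : p \in breve Q by apply/bigcupP; exists P; rewrite ?Ps_P.
have := Phi_le_max H e_connected p x q.
rewrite (PhiC H e_sym e_connected x q) leNgt gt_max (lt_le_trans hp (PhiS_le e H pP qb)).
by rewrite (PhiC H e_sym e_connected p q) (lt_le_trans hq (PhiS_le e H qQ pb)).
Qed.

Lemma Gstar_le P : P \in Ps -> Gstar e H Ps <= Gam P.
Proof.
move=> Ps_P; pose E r := exists2 Q, Q \in Ps & r = Gam Q.
have E_fin r : E r -> exists Q : {set T}, r = Gam Q by move=> [Q _ ->]; exists Q.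
have E_ne : exists r, E r by exists (Gam P), P.
change (inf E <= Gam P).
by have [r [_ -> r_min]] := inf_fin_attained E_fin E_ne; apply: r_min; exists P.
Qed.

Lemma Vset_ground s P : (forall y, H s <= H y) -> P \in Ps -> s \in P ->
  [/\ s \in Vset P, minH H (Vset P) = H s & ((Gstar e H Ps)%:E <= depth e H (Vset P))%E].
Proof.
move=> s_min Ps_P sP; have mP := minH_ground s_min sP.
have sV : s \in Vset P by rewrite mem_Vset_min.
have mV := minH_ground s_min sV.
split => //; apply/le_depthP => y yb; rewrite mV.
apply: le_trans (Vset_bd_ge Ps_P yb); rewrite -lerBrDl -mP.
exact: Gstar_le.
Qed.

Lemma Cs_of_cycles (L : {set {set T}}) : cycle_family L -> cycle_family (Cs_of e H Ps L).
Proof.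
have memC C : C \in Cs_of e H Ps L ->
   (exists2 P, P \in Ps & C = Vset P) \/
   (C \in L /\ forall P, P \in Ps -> [disjoint C & Vset P]).
  rewrite inE => /orP[/imsetP [P Ps_P ->]|]; first by left; exists P.
  by rewrite inE => /andP[CL /forall_inP h]; right; split.
move=> [L_neq0 L_disj L_cycle]; split.
- by move=> C /memC [[P Ps_P ->]|[CL _]]; [apply: Vset_neq0 | apply: L_neq0].
- move=> C1 C2 /memC [[P1 P1s ->]|[C1L C1_disj]] /memC [[P2 P2s ->]|[C2L C2_disj]] neq.
  + by apply: Vset_disjoint => //; apply: contraNneq neq => ->.
  + by rewrite disjoint_sym C2_disj.
  + exact: C1_disj.
  + exact: L_disj.
- by move=> C x y /memC [[P Ps_P ->]|[CL _]]; [apply: Vset_cycle | apply: L_cycle].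
Qed.

End Valleys.

Section ClosedClasses.
Variables (R : realType) (T : finType) (e : rel T) (H : T -> R).
Hypothesis e_sym : symmetric e.
Variables (Cs : {set {set T}}) (G : R).
Hypothesis Cs_cycles : cycle_family e H Cs.

Local Notation Pstar := (Pstar e H Cs G).
Local Notation classes := (classes e H Cs G).
Local Notation reach := (reach e H Cs G).

Implicit Types (K : {set {set T}}) (Q : {set T}).

Definition class_unions : {set {set T}} := [set \bigcup_(Q in K) Q | K : {set {set T}} in classes].

Lemma classesP K : K \in classes ->
  exists2 P0, P0 \in Pstar & K = [set Q in Pstar | reach P0 Q && reach Q P0].
Proof. by rewrite inE => /andP[/exists_inP [P0 P0s /eqP ->] _]; exists P0. Qed.

Lemma PstarP_Fmin Q : Q \in Pstar -> exists2 C, C \in Cs & Q = Fmin H C.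
Proof. by case/imsetP => C; rewrite inE => /andP[Cs' _] ->; exists C. Qed.

Lemma class_Fmin K Q : K \in classes -> Q \in K -> exists2 C, C \in Cs & Q = Fmin H C.
Proof. by move=> /classesP [P0 _ ->]; rewrite inE => /andP[/PstarP_Fmin]. Qed.

Lemma classes_eq K1 K2 Q : K1 \in classes -> K2 \in classes -> Q \in K1 -> Q \in K2 -> K1 = K2.
Proof.
move=> /classesP [P1 _ ->] /classesP [P2 _ ->].
rewrite !inE => /and3P[_ P1Q QP1] /and3P[_ P2Q QP2].
have P12 := connect_trans P1Q QP2; have P21 := connect_trans P2Q QP1.
apply/setP => Q'; rewrite !inE; case: (Q' \in Pstar) => //=.
apply/andP/andP => [[h1 h2]|[h1 h2]]; split.
- exact: connect_trans P21 h1.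
- exact: connect_trans h2 P12.
- exact: connect_trans P12 h1.
- exact: connect_trans h2 P21.
Qed.

Lemma class_unions_eq K1 K2 z : K1 \in classes -> K2 \in classes ->
  z \in \bigcup_(Q in K1) Q -> z \in \bigcup_(Q in K2) Q -> K1 = K2.
Proof.
move=> K1c K2c /bigcupP [Q1 Q1K zQ1] /bigcupP [Q2 Q2K zQ2].
have [C1 C1s E1] := class_Fmin K1c Q1K; have [C2 C2s E2] := class_Fmin K2c Q2K.
have zC1 : z \in C1 by apply: (subsetP (Fmin_sub H C1)); rewrite -E1.
have zC2 : z \in C2 by apply: (subsetP (Fmin_sub H C2)); rewrite -E2.
have [eC|neq] := eqVneq C1 C2.
  by subst C2; apply: classes_eq K1c K2c Q1K _; rewrite E1 -E2.
by case: Cs_cycles => _ Cs_disj _; rewrite (disjointFr (Cs_disj _ _ C1s C2s neq) zC1) in zC2.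
Qed.

Lemma class_union_neq0 K : K \in classes -> \bigcup_(Q in K) Q != set0.
Proof.
move=> Kc; have [P0 P0s EK] := classesP Kc.
have P0K : P0 \in K by rewrite EK inE P0s /reach connect0.
have [C Cs' P0E] := PstarP_Fmin P0s.
case: Cs_cycles => Cs_neq0 _ _; have /set0Pn [z zF] := Fmin_neq0 H (Cs_neq0 C Cs').
by apply/set0Pn; exists z; apply/bigcupP; exists P0; rewrite // P0E.
Qed.

Lemma class_unions_plateaux : plateau_family e H class_unions.
Proof.
split.
- by move=> P /imsetP [K Kc ->]; apply: class_union_neq0.
- move=> P Q /imsetP [K1 K1c ->] /imsetP [K2 K2c ->] neq.
  apply/pred0P => z /=; apply/negP => /andP[z1 z2].
  by move: neq; rewrite (class_unions_eq K1c K2c z1 z2) eqxx.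
- move=> P u v /imsetP [K Kc ->] uP euv hv.
  have hu : minH H (\bigcup_(Q in K) Q) <= H u by apply: minH_le.
  case/bigcupP: uP => Q QK uQ; have [C Cs' QE] := class_Fmin Kc QK.
  move: uQ; rewrite QE inE => /andP[uC /forall_inP u_min].
  have vC : v \in C.
    apply/negPn/negP => vC; case: Cs_cycles => _ _ Cs_cycle.
    have vb : v \in bd e C by rewrite inE vC /=; apply/exists_inP; exists u; rewrite // e_sym.
    by move: (Cs_cycle _ _ _ Cs' uC vb); rewrite ltNge (le_trans hv hu).
  apply/bigcupP; exists Q; rewrite // QE inE vC /=.
  by apply/forall_inP => y yC; apply: le_trans (le_trans hv hu) (u_min y yC).
Qed.

Lemma card_class_unions : #|class_unions| = #|classes|.
Proof.
rewrite /class_unions card_in_imset // => K1 K2 K1c K2c eU.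
have /set0Pn [z zU] := class_union_neq0 K1c.
have zU2 : z \in \bigcup_(Q in K2) Q by rewrite -eU.
exact: class_unions_eq K1c K2c zU zU2.
Qed.

Lemma mem_class_unions s P : P \in recP e H Cs G -> s \in P ->
  exists2 P', P' \in class_unions & s \in P'.
Proof.
case/bigcupP => K Kc PK sP; exists (\bigcup_(Q in K) Q); first exact: imset_f.
by apply/bigcupP; exists P.
Qed.

End ClosedClasses.

Section FirstLevel.
Variables (R : realType) (T : finType) (e : rel T) (H : T -> R).
Hypothesis e_sym : symmetric e.
Hypothesis e_connected : forall x y, connect e x y.

Lemma connect_invariant (r : rel T) (S : T -> Prop) x y :
  (forall u v, S u -> r u v -> S v) -> S x -> connect r x y -> S y.
Proof.
move=> S_inv Sx /connectP [p xp ->]; elim: p x Sx xp => //= z p IH x Sx /andP[rxz zp].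
exact: IH (S_inv _ _ Sx rxz) zp.
Qed.

Lemma stable_plateauP P : stable_plateau e H P ->
  [/\ P != set0,
      forall x y, x \in P -> y \in P -> connect [rel u v | [&& e u v, u \in P & v \in P]] x y,
      forall x y, x \in P -> y \in P -> H x = H y &
      forall x y, x \in P -> y \in bd e P -> H x < H y].
Proof.
case/and4P => P0 /forall_inP P_conn /forall_inP P_flat /forall_inP P_bd.
split => // x y xP yP.
- by move/forall_inP: (P_conn x xP); apply.
- by move/forall_inP: (P_flat x xP) => /(_ y yP) /eqP.
- by move/forall_inP: (P_bd x xP); apply.
Qed.

Lemma stable_plateau_sub P Q z : stable_plateau e H P -> stable_plateau e H Q ->
  z \in P -> z \in Q -> P \subset Q.
Proof.
move=> /stable_plateauP [_ P_conn P_flat _] /stable_plateauP [_ _ _ Q_bd] zP zQ.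
apply/subsetP => y yP; apply: (connect_invariant (S := fun u => u \in Q) _ zQ (P_conn _ _ zP yP)).
move=> u v uQ /and3P [euv uP vP]; apply/negPn/negP => vQ.
have vb : v \in bd e Q by rewrite inE vQ /=; apply/exists_inP; exists u; rewrite // e_sym.
by move: (Q_bd _ _ uQ vb); rewrite (P_flat _ _ uP vP) ltxx.
Qed.

Lemma Plateaux1_plateaux : plateau_family e H (Plateaux1 e H).
Proof.
split.
- by move=> P; rewrite inE => /andP[/stable_plateauP []].
- move=> P Q; rewrite !inE => /andP[sP _] /andP[sQ _] neq.
  apply/pred0P => z /=; apply/negP => /andP[zP zQ]; move: neq; apply/negP; rewrite negbK.
  by rewrite eqEsubset (stable_plateau_sub sP sQ zP zQ) (stable_plateau_sub sQ sP zQ zP).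
- move=> P u v; rewrite inE => /andP[/stable_plateauP [P0 _ P_flat P_bd] _] uP euv hv.
  have [x xP [mx _]] := minH_attained H P0.
  apply/negPn/negP => vP.
  have vb : v \in bd e P by rewrite inE vP /=; apply/exists_inP; exists u; rewrite // e_sym.
  by move: (P_bd _ _ uP vb); rewrite ltNge (le_trans hv) // mx (P_flat _ _ xP uP).
Qed.

Variable s : T.
Hypothesis s_min : forall y, H s <= H y.

Definition ground_edge := [rel u v | [&& e u v, H u <= H s & H v <= H s]].
Definition ground_plateau := [set y | connect ground_edge s y].

Lemma ground_plateau_H y : y \in ground_plateau -> H y = H s.
Proof.
rewrite inE => s_y; apply/le_anti; rewrite s_min andbT.
by apply: (connect_invariant (S := fun u => H u <= H s) _ (lexx _) s_y) => u v _ /and3P[].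
Qed.

Lemma ground_plateau_edge u v :
  u \in ground_plateau -> ground_edge u v -> v \in ground_plateau.
Proof. by rewrite !inE => s_u uv; apply: connect_trans s_u (connect1 (e := ground_edge) uv). Qed.

Lemma mem_ground_plateau : s \in ground_plateau.
Proof. by rewrite inE connect0. Qed.

Lemma ground_plateau_connected : connectedb e ground_plateau.
Proof.
pose rA := [rel u v | [&& e u v, u \in ground_plateau & v \in ground_plateau]].
have rA_sym : connect_sym rA.
  by apply: sym_connect_sym => u v /=; rewrite e_sym (andbC (u \in _)).
have s_rA y : y \in ground_plateau -> connect rA s y.
  rewrite {1}inE => s_y; pose S u := u \in ground_plateau /\ connect rA s u.
  suff [] : S y by [].
  apply: (connect_invariant (S := S) _ (conj mem_ground_plateau (connect0 _ _)) s_y).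
  move=> u v [uA s_u] uv; have vA := ground_plateau_edge uA uv; split => //.
  by apply: connect_trans s_u (connect1 _); rewrite /rA /= uA vA; case/and3P: uv => ->.
apply/forall_inP => x xA; apply/forall_inP => y yA.
by apply: connect_trans (s_rA y yA); rewrite rA_sym; apply: s_rA.
Qed.

Lemma ground_plateau_stable : stable_plateau e H ground_plateau.
Proof.
apply/and4P; split.
- by apply/set0Pn; exists s; apply: mem_ground_plateau.
- exact: ground_plateau_connected.
- apply/forall_inP => x xA; apply/forall_inP => y yA.
  by rewrite (ground_plateau_H xA) (ground_plateau_H yA).
- apply/forall_inP => x xA; apply/forall_inP => y; rewrite inE => /andP[yA /exists_inP [z zA eyz]].
  rewrite (ground_plateau_H xA) ltNge; apply: contra yA => hy.
  by apply: (ground_plateau_edge zA); rewrite /= e_sym eyz (ground_plateau_H zA) lexx hy.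
Qed.

Lemma ground_plateau_sub_Omegabar : ground_plateau \subset Omegabar e H.
Proof.
apply/subsetP => x xA; rewrite inE.
have xg : x \in ground H by rewrite inE; apply/forallP => y; rewrite (ground_plateau_H xA).
have sg : s \in ground H by rewrite inE; apply/forallP.
apply: le_trans (PhiS_le e H xg (set11 x)) _.
rewrite Phixx // (ground_plateau_H xA) -(Phixx H e_connected s).
pose E r := exists s1 s2, [/\ s1 \in ground H, s2 \in ground H & r = Phi e H s1 s2].
have E_fin r : E r -> exists p : T * T, r = Phi e H p.1 p.2.
  by move=> [a [b [_ _ ->]]]; exists (a, b).
by apply: (sup_fin_ub E_fin); exists s, s.
Qed.

Lemma ground_plateau_Plateaux1 : ground_plateau \in Plateaux1 e H.
Proof. by rewrite inE ground_plateau_stable ground_plateau_sub_Omegabar. Qed.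

End FirstLevel.

Section Hierarchy.
Variables (R : realType) (T : finType) (e : rel T) (H : T -> R).
Hypothesis e_sym : symmetric e.
Hypothesis e_connected : forall x y, connect e x y.
Variable s : T.
Hypothesis s_min : forall y, H s <= H y.

Definition level_invariant (d : {set {set T}} * {set {set T}}) :=
  [/\ plateau_family e H d.1, cycle_family e H d.2, (1 < #|d.1|)%N &
      exists2 P, P \in d.1 & s \in P].

Lemma level1_invariant : (1 < #|Plateaux1 e H|)%N -> level_invariant (level e H 1).
Proof.
move=> card_gt1; split => //=.
- exact: Plateaux1_plateaux.
- by split=> C; rewrite in_set0.
- by exists (ground_plateau e H s); [apply: ground_plateau_Plateaux1 | apply: mem_ground_plateau].
Qed.

Section Step.
Variable d : {set {set T}} * {set {set T}}.
Hypothesis d_inv : level_invariant d.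

Local Notation Cs := (Cs_of e H d.1 d.2).
Local Notation G := (Gstar e H d.1).

Lemma level_cycles : cycle_family e H Cs.
Proof. by case: d_inv => Ps_plat L_cycles Ps_card _; apply: Cs_of_cycles. Qed.

Lemma ground_recurrent : exists2 P, P \in recP e H Cs G & s \in P.
Proof.
case: d_inv => Ps_plat _ Ps_card [P Ps_P sP].
have [sV mV dV] := Vset_ground e_sym e_connected Ps_plat Ps_card s_min Ps_P sP.
have VCs : Vset e H d.1 P \in Cs by rewrite inE imset_f.
case: level_cycles => Cs_neq0 Cs_disj _.
exists (Fmin H (Vset e H d.1 P)).
  exact: (deep_bottom_recurrent (Gs := G) e_sym Cs_neq0 Cs_disj s_min VCs mV dV).
by rewrite inE sV; apply/forall_inP => y _; apply: s_min.
Qed.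

Lemma step_invariant : (1 < #|classes e H Cs G|)%N -> level_invariant (step e H d).
Proof.
move=> classes_card; rewrite /level_invariant /step /=; split.
- exact (class_unions_plateaux e_sym G level_cycles).
- apply: cycle_family_sub level_cycles; apply/subsetP => C.
  by rewrite inE => /orP[]; rewrite !inE => /andP[] // /andP[].
- by rewrite (card_class_unions G level_cycles).
- by have [P PP sP] := ground_recurrent; apply: mem_class_unions PP sP.
Qed.

End Step.
End Hierarchy.

Theorem mainTheorem7 (R : realType) (T : finType) (e : rel T) (H : T -> R) :
  symmetric e -> irreflexive e -> (forall x y : T, connect e x y) ->
  (1 < #|Plateaux1 e H|)%N ->
  forall s : T, s \in ground H ->
  forall h : nat, (0 < h)%N ->
  (forall k : nat, (0 < k < h)%N -> (1 < nu e H k)%N) ->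
  exists2 P : {set T}, P \in recL e H h & s \in P.
Proof.
move=> e_sym _ e_connected card_gt1 s s_ground h h_gt0 nu_gt1.
have s_min : forall y, H s <= H y by move: s_ground; rewrite inE => /forallP.
have inv k : (0 < k <= h)%N -> level_invariant e H s (level e H k).
  elim: k => [//|[|k] IH] /andP[_ k_le_h]; first exact: level1_invariant.
  exact (step_invariant e_sym e_connected s_min (IH (ltnW k_le_h)) (nu_gt1 k.+1 k_le_h)).
have h_range : (0 < h <= h)%N by rewrite h_gt0 leqnn.
exact (ground_recurrent e_sym e_connected s_min (inv h h_range)).
Qed.
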